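(* Let $S$ be a monoid, $n\in\mathbb N$, and let $A$ be an $n$-absolutely pure $S$-act which is a subact of an $S$-act $B$. Let $\theta:B\to A$ be an $S$-morphism and let $\Sigma=\Sigma(x_1,\dots,x_m)$ be a finite consistent set of equations over $B$ with $m\le n$. Then there is an $S$-morphism $B(\Sigma)\to A$ extending $\theta$ (with $B$ identified with its image in $B(\Sigma)$), and if $\theta$ is a retraction (i.e. $a\theta=a$ for all $a\in A$) then this $S$-morphism is also a retraction onto $A$.
   Context: A (right) $S$-act is a set with an action $(a,s)\mapsto as$ with $a1=a$, $a(st)=(as)t$. Equations over an $S$-act $C$ with variables from $X$ have the forms $xs=yt$, $xs=xt$, $xs=c$ ($x,y\in X$, $s,t\in S$, $c\in C$); a solution in $D\supseteq C$ is a family in $D$ satisfying them; a set of equations is consistent if it has a solution in some $S$-act containing $C$. $A$ is $n$-absolutely pure if every finite consistent set of equations over $A$ in at most $n$ variables has a solution in $A$. For a set $\Sigma$ of equations over $B$: $H(\Sigma)=\{(xu,yv):xu=yv\in\Sigma\}$, $K(\Sigma)=\{(xs,c):xs=c\in\Sigma\}$, $\kappa_\Sigma$ is the congruence on $B\sqcup F_S(X)$ ($F_S(X)$ the free $S$-act) generated by $H(\Sigma)\cup K(\Sigma)$, and $B(\Sigma)=(B\sqcup F_S(X))/\kappa_\Sigma$, into which $B$ embeds via $b\mapsto[b]$ when $\Sigma$ is consistent. *)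

From Stdlib Require Import List FunctionalExtensionality PropExtensionality ProofIrrelevance.
Set Implicit Arguments.

Record monoid := Monoid {
  mcar :> Type;
  mmul : mcar -> mcar -> mcar;
  mone : mcar;
  mmulA : forall a b c, mmul a (mmul b c) = mmul (mmul a b) c;
  mmul1l : forall a, mmul mone a = a;
  mmul1r : forall a, mmul a mone = a }.

Record act (S : monoid) := Act {
  acar :> Type;
  aact : acar -> S -> acar;
  aact1 : forall a, aact a (mone S) = a;
  aactM : forall a s t, aact a (mmul S s t) = aact (aact a s) t }.
Arguments aact {S _} _ _.

Section Acts.
Variable S : monoid.

Definition is_morph (C D : act S) (f : C -> D) : Prop :=
  forall a s, f (aact a s) = aact (f a) s.

Definition closed_sub (B : act S) (P : B -> Prop) :=
  forall b s, P b -> P (aact b s).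

Arguments closed_sub {B} P.
Arguments is_morph {C D} f.
Section Sub.
Variables (B : act S) (P : B -> Prop) (HP : closed_sub P).
Definition sub_aact (a : {b : B | P b}) (s : S) : {b : B | P b} :=
  exist _ (aact (proj1_sig a) s) (HP s (proj2_sig a)).
Lemma sub_aact1 a : sub_aact a (mone S) = a.
Proof. destruct a as [b pb]; unfold sub_aact; simpl.
  apply eq_sig_hprop; [intros; apply proof_irrelevance| apply aact1]. Qed.
Lemma sub_aactM a s t : sub_aact a (mmul S s t) = sub_aact (sub_aact a s) t.
Proof. destruct a as [b pb]; unfold sub_aact; simpl.
  apply eq_sig_hprop; [intros; apply proof_irrelevance| apply aactM]. Qed.
Definition sub_act : act S := @Act S _ sub_aact sub_aact1 sub_aactM.
End Sub.

(** Equations over C with variables from X: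
    EqVV x s y t  is  xs = yt  (with x = y allowed, giving xs = xt),
    EqVC x s c    is  xs = c. *)
Inductive equation (C : act S) (X : Type) :=
| EqVV : X -> S -> X -> S -> equation C X
| EqVC : X -> S -> C -> equation C X.
Arguments EqVV {C X}. Arguments EqVC {C X}.

Definition solves (C D : act S) (iota : C -> D) (X : Type)
  (Sigma : list (equation C X)) (sol : X -> D) : Prop :=
  forall e, In e Sigma ->
    match e with
    | EqVV x s y t => aact (sol x) s = aact (sol y) t
    | EqVC x s c => aact (sol x) s = iota c
    end.

Arguments solves {C D} iota {X} Sigma sol.

Definition consistent (C : act S) (X : Type) (Sigma : list (equation C X)) : Prop :=
  exists (D : act S) (iota : C -> D),
    is_morph iota /\ (forall a b, iota a = iota b -> a = b) /\
    exists sol : X -> D, solves iota Sigma sol.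

Arguments consistent {C X} Sigma.

Definition var (m : nat) := {k : nat | k < m}.

Definition n_abs_pure (n : nat) (A : act S) : Prop :=
  forall m, m <= n -> forall Sigma : list (equation A (var m)),
    consistent Sigma -> exists sol : var m -> A, solves (fun a => a) Sigma sol.

(** B ⊔ F_S(X), with F_S(X) = X × S the free act on X *)
Section BSigma.
Variables (B : act S) (X : Type) (Sigma : list (equation B X)).

Definition U := (B + (X * S))%type.
Definition uact (w : U) (s : S) : U :=
  match w with
  | inl b => inl (aact b s)
  | inr (x, u) => inr (x, mmul S u s)
  end.

Definition HK (p q : U) : Prop :=
  (exists x u y v, In (EqVV x u y v) Sigma /\ p = inr (x, u) /\ q = inr (y, v)) \/
  (exists x s c, In (EqVC x s c) Sigma /\ p = inr (x, s) /\ q = inl c).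

Inductive kappa : U -> U -> Prop :=
| kgen p q : HK p q -> kappa p q
| krefl p : kappa p p
| ksym p q : kappa p q -> kappa q p
| ktrans p q r : kappa p q -> kappa q r -> kappa p r
| kact p q s : kappa p q -> kappa (uact p s) (uact q s).

(** B(Sigma) = (B ⊔ F_S(X)) / kappa_Sigma, classes as predicates *)
Definition Qcar := {P : U -> Prop | exists u, P = kappa u}.

Definition cls (u : U) : Qcar := exist _ (kappa u) (ex_intro _ u eq_refl).

Lemma qact_ok (q : Qcar) (s : S) :
  exists u, (fun w => exists v, proj1_sig q v /\ kappa (uact v s) w) = kappa u.
Proof.
  destruct q as [P [u0 ->]]; simpl. exists (uact u0 s).
  apply functional_extensionality; intro w; apply propositional_extensionality.
  split.
  - intros [v [H1 H2]]. eapply ktrans; [apply kact; exact H1| exact H2].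
  - intro H. exists u0. split; [apply krefl| exact H].
Qed.

Definition qact (q : Qcar) (s : S) : Qcar := exist _ _ (qact_ok q s).

Lemma qact_cls u s : qact (cls u) s = cls (uact u s).
Proof.
  apply eq_sig_hprop; [intros; apply proof_irrelevance|]. simpl.
  apply functional_extensionality; intro w; apply propositional_extensionality.
  split.
  - intros [v [H1 H2]]. eapply ktrans; [apply kact; exact H1| exact H2].
  - intro H. exists u. split; [apply krefl| exact H].
Qed.

Lemma uact1 u : uact u (mone S) = u.
Proof. destruct u as [b|[x v]]; simpl; [rewrite aact1|rewrite mmul1r]; reflexivity. Qed.
Lemma uactM u s t : uact u (mmul S s t) = uact (uact u s) t.
Proof. destruct u as [b|[x v]]; simpl; [rewrite aactM|rewrite mmulA]; reflexivity. Qed.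

Lemma qact1 q : qact q (mone S) = q.
Proof.
  destruct q as [P [u ->]] eqn:E.
  change (qact (cls u) (mone S) = cls u) in |- *.
  rewrite qact_cls, uact1; reflexivity.
Qed.

Lemma qactM q s t : qact q (mmul S s t) = qact (qact q s) t.
Proof.
  destruct q as [P [u ->]] eqn:E.
  change (qact (cls u) (mmul S s t) = qact (qact (cls u) s) t).
  rewrite !qact_cls, uactM; reflexivity.
Qed.

Definition BSigma : act S := @Act S _ qact qact1 qactM.

Definition embB (b : B) : BSigma := cls (inl b).
End BSigma.
End Acts.

Arguments is_morph {S C D} f.
Arguments closed_sub {S B} P.
Arguments sub_act {S B P} HP.
Arguments n_abs_pure {S} n A.
Arguments solves {S C D} iota {X} Sigma sol.
Arguments consistent {S C X} Sigma.
Arguments EqVV {S C X}. Arguments EqVC {S C X}.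
Arguments BSigma {S B X} Sigma.
Arguments embB {S B X} Sigma b.

From Stdlib Require Import List ClassicalEpsilon Classical ProofIrrelevance.
Set Implicit Arguments.

(* A consistent system over B stays consistent when its constants are pushed
   into A along theta: a solution in D ⊇ B is carried to the pushout of
   A <- B -> D, which contains A.  Purity then gives a solution in A, and
   sending x u to (solution of x) u and b to theta b respects the generators
   of kappa, hence induces a morphism on B(Sigma) extending theta. *)

Definition map_equation (S : monoid) (C C' : act S) (theta : C -> C') (X : Type)
  (e : equation C X) : equation C' X :=
  match e with
  | EqVV x s y t => EqVV x s y t
  | EqVC x s c => EqVC x s (theta c)
  end.
Arguments map_equation {S C C'} theta {X} e.

Lemma solves_morph (S : monoid) (C C' D D' : act S) (iota : C -> D) (iota' : C' -> D')
  (theta : C -> C') (f : D -> D') (X : Type) (Sigma : list (equation C X)) (sol : X -> D) :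
  is_morph f -> (forall c, f (iota c) = iota' (theta c)) ->
  solves iota Sigma sol -> solves iota' (map (map_equation theta) Sigma) (fun x => f (sol x)).
Proof.
  intros Hf Hcomm Hsol e He.
  apply in_map_iff in He; destruct He as [e0 [<- He0]].
  specialize (Hsol e0 He0).
  destruct e0 as [x s y t | x s c]; simpl in *; rewrite <- !Hf, Hsol; auto.
Qed.

Section Pushout.
Variables (S : monoid) (B A D : act S) (iota : B -> D) (theta : B -> A).
Hypotheses (Hiota : is_morph iota) (Hiota_inj : forall a b, iota a = iota b -> a = b)
  (Htheta : is_morph theta).

Definition in_image (d : D) : Prop := exists b, iota b = d.

(* Elements of iota B are identified with their theta-images in A. *)
Definition pushout_car : Type := (A + {d : D | ~ in_image d})%type.

Definition to_pushout (d : D) : pushout_car :=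
  match excluded_middle_informative (in_image d) with
  | left H => inl (theta (proj1_sig (constructive_indefinite_description _ H)))
  | right H => inr (exist _ d H)
  end.

Lemma to_pushout_iota b : to_pushout (iota b) = inl (theta b).
Proof.
  unfold to_pushout; destruct (excluded_middle_informative _) as [H | H].
  - destruct (constructive_indefinite_description _ H) as [b' Hb']; simpl.
    rewrite (Hiota_inj Hb'); reflexivity.
  - exfalso; apply H; exists b; reflexivity.
Qed.

Lemma to_pushout_out d (H : ~ in_image d) : to_pushout d = inr (exist _ d H).
Proof.
  unfold to_pushout; destruct (excluded_middle_informative _) as [H' | H'].
  - contradiction.
  - do 2 f_equal; apply proof_irrelevance.
Qed.

Definition pushout_aact (e : pushout_car) (s : S) : pushout_car :=
  match e with
  | inl a => inl (aact a s)
  | inr d => to_pushout (aact (proj1_sig d) s)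
  end.

Lemma pushout_aact_to d s : pushout_aact (to_pushout d) s = to_pushout (aact d s).
Proof.
  destruct (classic (in_image d)) as [[b <-] | H].
  - rewrite to_pushout_iota; simpl.
    rewrite <- Hiota, to_pushout_iota, Htheta; reflexivity.
  - rewrite (to_pushout_out H); reflexivity.
Qed.

Lemma pushout_aact1 e : pushout_aact e (mone S) = e.
Proof.
  destruct e as [a | [d H]]; simpl; rewrite aact1; [reflexivity | apply to_pushout_out].
Qed.

Lemma pushout_aactM e s t : pushout_aact e (mmul S s t) = pushout_aact (pushout_aact e s) t.
Proof.
  destruct e as [a | [d H]]; simpl; rewrite aactM; [reflexivity | rewrite pushout_aact_to; reflexivity].
Qed.

Definition pushout : act S := @Act S pushout_car pushout_aact pushout_aact1 pushout_aactM.

Lemma to_pushout_morph : is_morph (to_pushout : D -> pushout).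
Proof. intros d s; symmetry; apply pushout_aact_to. Qed.

End Pushout.
Arguments to_pushout {S B A D} iota theta d.

Lemma consistent_map_equation (S : monoid) (B A : act S) (theta : B -> A) (X : Type)
  (Sigma : list (equation B X)) :
  is_morph theta -> consistent Sigma -> consistent (map (map_equation theta) Sigma).
Proof.
  intros Htheta [D [iota [Hiota [Hiota_inj [sol Hsol]]]]].
  exists (pushout Hiota Hiota_inj Htheta), (fun a => inl a); split; [| split].
  - intros a s; reflexivity.
  - intros a b H; injection H; auto.
  - exists (fun x => to_pushout iota theta (sol x)).
    apply (solves_morph (iota := iota)); [| | exact Hsol].
    + apply to_pushout_morph.
    + apply to_pushout_iota, Hiota_inj.
Qed.

Section Lift.
Variables (S : monoid) (B A : act S) (X : Type) (Sigma : list (equation B X)) (g : U B X -> A).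
Hypotheses (Hg_act : forall u s, g (uact u s) = aact (g u) s)
  (Hg_HK : forall p q, HK Sigma p q -> g p = g q).

Lemma kappa_lift p q : kappa Sigma p q -> g p = g q.
Proof.
  induction 1; auto; [congruence |].
  rewrite !Hg_act, IHkappa; reflexivity.
Qed.

Definition lift (q : BSigma Sigma) : A :=
  g (proj1_sig (constructive_indefinite_description _ (proj2_sig q))).

Lemma lift_cls u : lift (cls Sigma u) = g u.
Proof.
  unfold lift; destruct (constructive_indefinite_description _ _) as [u' Hu']; simpl in *.
  symmetry; apply kappa_lift; rewrite Hu'; apply krefl.
Qed.

Lemma cls_surj (q : BSigma Sigma) : exists u, q = cls Sigma u.
Proof.
  destruct q as [P [u Hu]]; exists u.
  apply eq_sig_hprop; [intros; apply proof_irrelevance | exact Hu].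
Qed.

Lemma lift_morph : is_morph lift.
Proof.
  intros q s; destruct (cls_surj q) as [u ->].
  change (lift (qact (cls Sigma u) s) = aact (lift (cls Sigma u)) s).
  rewrite qact_cls, !lift_cls; apply Hg_act.
Qed.

End Lift.
Arguments lift {S B A X Sigma} g q.

Section SolutionMap.
Variables (S : monoid) (B A : act S) (theta : B -> A) (X : Type) (solA : X -> A).
Hypothesis Htheta : is_morph theta.

Definition solution_map (u : U B X) : A :=
  match u with
  | inl b => theta b
  | inr (x, v) => aact (solA x) v
  end.

Lemma solution_map_act u s : solution_map (uact u s) = aact (solution_map u) s.
Proof. destruct u as [b | [x v]]; simpl; [apply Htheta | apply aactM]. Qed.

Lemma solution_map_HK (Sigma : list (equation B X)) p q :
  solves (fun a => a) (map (map_equation theta) Sigma) solA ->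
  HK Sigma p q -> solution_map p = solution_map q.
Proof.
  intros Hsol [[x [u [y [v [Hin [-> ->]]]]]] | [x [s [c [Hin [-> ->]]]]]];
    exact (Hsol _ (in_map (map_equation theta) _ _ Hin)).
Qed.

End SolutionMap.
Arguments solution_map {S B A} theta {X} solA u.

Theorem mainTheorem13 (S : monoid) (n : nat) (B : act S)
  (P : B -> Prop) (HP : closed_sub P)
  (Hpure : n_abs_pure n (sub_act HP))
  (theta : B -> sub_act HP) (Htheta : is_morph theta)
  (m : nat) (Sigma : list (equation B (var m)))
  (Hcons : consistent Sigma) (Hm : m <= n) :
  exists phi : BSigma Sigma -> sub_act HP,
    is_morph phi /\
    (forall b : B, phi (embB Sigma b) = theta b) /\
    ((forall a : sub_act HP, theta (proj1_sig a) = a) ->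
       forall a : sub_act HP, phi (embB Sigma (proj1_sig a)) = a).
Proof.
  destruct (Hpure m Hm _ (consistent_map_equation Htheta Hcons)) as [solA HsolA].
  pose (g := solution_map theta solA).
  assert (Hg_act : forall u s, g (uact u s) = aact (g u) s) by apply solution_map_act, Htheta.
  assert (Hg_HK : forall p q, HK Sigma p q -> g p = g q) by (intros p q; exact (solution_map_HK theta HsolA)).
  assert (Hext : forall b, lift g (embB Sigma b) = theta b).
  { intro b; unfold embB; rewrite lift_cls; auto. }
  exists (lift g); split; [| split].
  - apply lift_morph; assumption.
  - exact Hext.
  - intros Hretr a; rewrite Hext; apply Hretr.
Qed.
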